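(* Let $F=A^\sharp\circ B\circ P$, i.e. $F(x)=A^\sharp(B\odot(Px))$ for $x\in\mathbb{T}^n$, where $A\in\mathbb{T}^{m\times n}$ has at least one finite entry per column, $B\in\mathbb{T}^{m\times q}$ has at least one finite entry per row, the finite entries of $A$ and $B$ are integers, and $P\in\mathbb{R}^{q\times n}$ is row-stochastic with $P_{il}=Q_{il}/M$ for integers $Q_{il}$ and a positive integer $M$. Suppose that $F$ has a bias vector and that $\rho(F)\ne0$. Let $k$ be the number of nondeterministic states. Then $\operatorname{cond}(F)=|\rho(F)|^{-1}\le nM^{\min\{k,n-1\}}$.
   Context: $\mathbb{T}=\mathbb{R}\cup\{-\infty\}$. For $C\in\mathbb{T}^{r\times s}$, $z\in\mathbb{T}^s$: $(C\odot z)_i=\max_j(C_{ij}+z_j)$; the adjoint is $C^\sharp(y)_j=\min_i(-C_{ij}+y_i)$, with $(+\infty)+(-\infty)=+\infty$. $Pz$ is the usual matrix-vector product with $0\cdot(-\infty)=0$. Row-stochastic: nonnegative entries, rows summing to $1$. A state $i\in\{1,\dots,q\}$ is nondeterministic if there are at least two indices $l\ne l'$ in $\{1,\dots,n\}$ with $P_{il}>0$ and $P_{il'}>0$. A bias vector is $v\in\mathbb{R}^n$ with $F(v)=\lambda+v$ for some $\lambda\in\mathbb{R}$ (entrywise addition); this $\lambda$ is unique and is the ergodic constant $\rho(F)$. $\operatorname{cond}(F)$ denotes $|\rho(F)|^{-1}$. *)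

From Stdlib Require Import Reals Lra Lia ZArith Arith List.
Import ListNotations.
Open Scope R_scope.

(* The tropical semiring T = R ∪ {-oo}: None stands for -oo. *)
Definition trop := option R.

(* Extended reals R ∪ {-oo, +oo}, used for values of the adjoint A^#. *)
Inductive ext : Type := NInf | Fin (r : R) | PInf.

Definition tadd (a b : trop) : trop :=
  match a, b with Some x, Some y => Some (x + y) | _, _ => None end.

Definition tmax (a b : trop) : trop :=
  match a, b with
  | None, _ => b
  | _, None => a
  | Some x, Some y => Some (Rmax x y)
  end.

Definition emin (a b : ext) : ext :=
  match a, b with
  | PInf, _ => b
  | _, PInf => a
  | NInf, _ => NInf
  | _, NInf => NInf
  | Fin x, Fin y => Fin (Rmin x y)
  end.

(* Matrices are functions nat -> nat -> _, vectors nat -> _, with the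
   relevant dimensions passed explicitly; only indices below the
   dimensions are used. *)

Definition mp_app (C : nat -> nat -> trop) (s : nat) (z : nat -> trop)
  : nat -> trop :=
  fun i => fold_right (fun j acc => tmax (tadd (C i j) (z j)) acc) None (seq 0 s).

(* C^#(y)_j = min_{i<r} (-C_ij + y_i), with (+oo) + (-oo) = +oo *)
Definition sharp_term (c : trop) (y : trop) : ext :=
  match c with
  | None => PInf
  | Some c' => match y with None => NInf | Some y' => Fin (- c' + y') end
  end.

Definition sharp (C : nat -> nat -> trop) (r : nat) (y : nat -> trop)
  : nat -> ext :=
  fun j => fold_right (fun i acc => emin (sharp_term (C i j) (y i)) acc) PInf (seq 0 r).

(* (P z)_i = sum_{l<n} P_il z_l, ordinary product with 0 * (-oo) = 0 *)
Definition pm_term (p : R) (x : trop) : trop :=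
  if Req_EM_T p 0 then Some 0
  else match x with None => None | Some x' => Some (p * x') end.

Definition pmul (P : nat -> nat -> R) (n : nat) (x : nat -> trop) : nat -> trop :=
  fun i => fold_right (fun l acc => tadd (pm_term (P i l) (x l)) acc) (Some 0) (seq 0 n).

(* F = A^# ∘ B ∘ P, with A : m×n, B : m×q, P : q×n *)
Definition Fop (A B : nat -> nat -> trop) (P : nat -> nat -> R)
  (m n q : nat) (x : nat -> trop) : nat -> ext :=
  sharp A m (mp_app B q (pmul P n x)).

Definition row_sum (P : nat -> nat -> R) (n : nat) (i : nat) : R :=
  fold_right Rplus 0 (map (P i) (seq 0 n)).

Definition row_stochastic (P : nat -> nat -> R) (q n : nat) : Prop :=
  (forall i l, (i < q)%nat -> (l < n)%nat -> 0 <= P i l) /\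
  (forall i, (i < q)%nat -> row_sum P n i = 1).

Definition nondeterministic (P : nat -> nat -> R) (n i : nat) : Prop :=
  exists l l', (l < n)%nat /\ (l' < n)%nat /\ l <> l' /\ 0 < P i l /\ 0 < P i l'.

Definition npos_row (P : nat -> nat -> R) (n i : nat) : nat :=
  length (filter (fun l => if Rlt_dec 0 (P i l) then true else false) (seq 0 n)).

Definition num_nondet (P : nat -> nat -> R) (q n : nat) : nat :=
  length (filter (fun i => Nat.leb 2 (npos_row P n i)) (seq 0 q)).

Definition is_bias (A B : nat -> nat -> trop) (P : nat -> nat -> R)
  (m n q : nat) (v : nat -> R) (lam : R) : Prop :=
  forall j, (j < n)%nat -> Fop A B P m n q (fun l => Some (v l)) j = Fin (lam + v j).

From Stdlib Require Import Reals ZArith Arith List.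
Open Scope R_scope.

(* Each coordinate of the bias equation reads lam + v_j = c_j + (P v)_(rho j)
   with c_j an integer, because the min in A^# and the max in B ⊙ _ are
   attained at integer entries. Scaling rows of P to integers turns this into
   an affine eigen-equation d_i (lam + u_i) = h_i + sum_l T_il u_l, with T a
   natural matrix of row sums d and h integral. The Markov chain tree theorem,
   applied on a minimal closed class, yields a natural left eigenvector y of T
   relative to d with y_r <= prod_(i <> r) d_i. Weighting by y makes u cancel,
   so lam * sum_i y_i d_i is a nonzero integer and |lam|^-1 <= sum_i y_i d_i.
   On the columns (T_jl = M P_(rho j) l, all d = M) this gives n M^(n-1); on
   the states, only the k nondeterministic rows need the scale M and y lives
   on the at most n states hit by rho, giving n M^k. *)

Module CondBound.
From Stdlib Require Import Lia.
From mathcomp Require Import all_boot all_algebra Rstruct zify.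
Set Implicit Arguments. Unset Strict Implicit. Unset Printing Implicit Defensive.
Import GRing.Theory Num.Theory.
Local Close Scope R_scope.
Local Open Scope nat_scope.

Section MarkovChainTree.
Variables (V : finType) (T : V -> V -> nat).

Definition out_weight i := \sum_l T i l.
Definition universal (g : {ffun V -> V}) r := [forall i, fconnect g i r].
Definition arborescence (g : {ffun V -> V}) r := (g r == r) && universal g r.
Definition tree_weight r := \sum_(g | arborescence g r) \prod_(i | i != r) T i (g i).

Lemma fconnect_agree_off (f1 f2 : V -> V) r i :
  (forall x, x != r -> f1 x = f2 x) -> fconnect f1 i r -> fconnect f2 i r.
Proof.
move=> f12 /iter_findex hit.
have [t /eqP ht tmin] : exists2 t, iter t f1 i == r & forall s, iter s f1 i == r -> t <= s.
  by case: (ex_minnP (ex_intro (fun t => iter t f1 i == r) _ (introT eqP hit))) => t; exists t.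
suff iter12 : forall s, s <= t -> iter s f1 i = iter s f2 i.
  by have := fconnect_iter f2 t i; rewrite -iter12 // ht.
elim=> [|s IH] lt_st //=.
rewrite IH ?(ltnW lt_st) // f12 // -IH ?(ltnW lt_st) //.
by apply: contraTneq lt_st => /eqP/tmin; rewrite leqNgt => ->.
Qed.

Definition set_root (g : {ffun V -> V}) r x : {ffun V -> V} :=
  [ffun i => if i == r then x else g i].

Lemma fconnect_set_root g r x i : fconnect (set_root g r x) i r = fconnect g i r.
Proof.
by apply/idP/idP; apply: fconnect_agree_off => y yr; rewrite ffunE (negbTE yr).
Qed.

Lemma universal_set_root g r x : universal (set_root g r x) r = universal g r.
Proof. by apply: eq_forallb => i; rewrite fconnect_set_root. Qed.

Lemma fconnect_cycle_inj (g : V -> V) r1 r2 :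
  fconnect g r1 r2 -> fconnect g r2 r1 -> g r1 = g r2 -> r1 = r2.
Proof.
move=> /iter_findex h12 /iter_findex h21 g12.
set a := findex g r1 r2 in h12; set b := findex g r2 r1 in h21.
have loop : iter (b + a) g r1 = r1 by rewrite iterD h12 h21.
case: (posnP (b + a)) => [/eqP|ab_gt0].
  by rewrite addn_eq0 => /andP[_ /eqP a0]; rewrite -h12 a0.
have : iter (b + a).-1 g (g r1) = r1 by rewrite -iterSr prednK.
by rewrite g12 -h12 -iterSr -iterD prednK // addnC iterD loop.
Qed.

(* In a functional graph the universal sinks form the unique cycle, so each
   universal vertex has exactly one universal preimage. *)
Lemma sum_universal_preimage (g : {ffun V -> V}) l :
  \sum_r (universal g r && (g r == l) : nat) = universal g l.
Proof.
have [/forallP univ_l|not_univ] := boolP (universal g l); last first.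
  rewrite big1 // => r _; apply/eqP; rewrite eqb0.
  apply: contra not_univ => /andP[/forallP univ_r /eqP <-].
  by apply/forallP => i; apply: connect_trans (univ_r i) (fconnect1 _ _).
have /iter_findex gl_l := univ_l (g l).
set r := iter (findex g (g l) l) g l.
have gr : g r = l by rewrite /r -iterS iterSr gl_l.
have univ_r : universal g r.
  by apply/forallP => i; apply: connect_trans (univ_l i) (fconnect_iter _ _ _).
rewrite (bigD1 r) /= ?univ_r ?gr ?eqxx // big1 // => r' r'r.
apply/eqP; rewrite eqb0; apply: contra r'r => /andP[/forallP univ_r' /eqP gr'].
apply/eqP; apply: (@fconnect_cycle_inj g); last by rewrite gr gr'.
  by move/forallP: univ_r.
exact: univ_r'.
Qed.

Lemma set_root_twice g r x y : set_root (set_root g r y) r x = set_root g r x.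
Proof. by apply/ffunP => i; rewrite !ffunE; case: eqP. Qed.

Lemma set_root_id g r x : (set_root g r x == g) = (g r == x).
Proof.
apply/eqP/eqP => [/ffunP/(_ r)|<-]; first by rewrite ffunE eqxx.
by apply/ffunP => i; rewrite ffunE; case: eqP => // ->.
Qed.

Lemma arborescence_reroot r x :
  \sum_(f | arborescence f r) (\prod_(i | i != r) T i (f i)) * T r x
  = \sum_(g | universal g r && (g r == x)) \prod_i T i (g i).
Proof.
rewrite (reindex_onto (fun g => set_root g r r) (fun f => set_root f r x)); last first.
  by move=> f /andP[fr _]; rewrite set_root_twice; apply/eqP; rewrite set_root_id.
apply: eq_big => [g|g /andP[_]]; rewrite set_root_twice set_root_id //.
  by rewrite /arborescence universal_set_root ffunE !eqxx.
move=> /eqP gx; rewrite [in RHS](bigD1 r) //= mulnC gx; congr (_ * _).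
by apply: eq_bigr => i ir; rewrite !ffunE (negbTE ir).
Qed.

Lemma tree_weight_stationary l :
  \sum_r tree_weight r * T r l = tree_weight l * out_weight l.
Proof.
pose W (g : {ffun V -> V}) := \prod_i T i (g i).
transitivity (\sum_r \sum_(g | universal g r && (g r == l)) W g).
  by apply: eq_bigr => r _; rewrite big_distrl -arborescence_reroot.
rewrite (exchange_big_dep predT) //=.
transitivity (\sum_(g | universal g l) W g).
  rewrite [RHS]big_mkcond; apply: eq_bigr => g _.
  have -> : (if universal g l then W g else 0) = universal g l * W g.
    by case: (universal g l); rewrite ?mul1n.
  rewrite -sum_universal_preimage big_distrl big_mkcond /=.
  by apply: eq_bigr => r _; case: (_ && _); rewrite ?mul1n.
rewrite (partition_big (fun g : {ffun V -> V} => g l) predT) //.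
rewrite /out_weight big_distrr; apply: eq_bigr => x _.
by rewrite big_distrl -arborescence_reroot.
Qed.

Lemma tree_weight_le_prod r : tree_weight r <= \prod_(i | i != r) out_weight i.
Proof.
rewrite /out_weight (big_distr_big r) /=.
apply: sub_le_big => [//|x y|f /andP[/eqP fr _]]; first exact: leq_addr.
apply/familyP => i /=; case: ifP => //= /negbFE/eqP ->.
by rewrite inE fr.
Qed.

Lemma tree_weight_gt0 r g :
  arborescence g r -> (forall i, i != r -> 0 < T i (g i)) -> 0 < tree_weight r.
Proof.
move=> arb_g Tg; rewrite /tree_weight (bigD1 g) //=.
by rewrite ltn_addr // prodn_cond_gt0.
Qed.

End MarkovChainTree.

Section StationaryVector.
Variables (V : finType) (T : V -> V -> nat).

Definition forward_closed (X : {set V}) :=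
  [forall i in X, forall l, (0 < T i l) ==> (l \in X)].

Lemma forward_closedP X i l : forward_closed X -> i \in X -> 0 < T i l -> l \in X.
Proof. by move=> /forall_inP/(_ i) X_closed /X_closed/forallP/(_ l)/implyP. Qed.

Section MinimalClosedClass.
Variables (C : {set V}) (r : V).
Hypotheses (C_closed : forward_closed C) (r_in_C : r \in C)
  (C_min : forall X, forward_closed X -> X != set0 -> #|C| <= #|X|).

Lemma minimal_class_edge_into (X : {set V}) :
  r \in X -> X \subset C -> #|X| < #|C| ->
  exists i l, [/\ i \in C :\: X, l \in X & 0 < T i l].
Proof.
move=> rX XC ltXC.
case: (boolP [exists i in C :\: X, exists l in X, 0 < T i l]).
  by case/exists_inP=> i iCX /exists_inP[l lX Til]; exists i, l.
move=> no_edge; exfalso.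
have CX_closed : forward_closed (C :\: X).
  apply/forall_inP => i iCX; apply/forallP => l; apply/implyP => Til.
  move: iCX; rewrite !inE => /andP[iX iC]; rewrite (forward_closedP C_closed iC Til) andbT.
  apply: contra no_edge => lX; apply/exists_inP; exists i; first by rewrite inE iX.
  by apply/exists_inP; exists l.
have CX_ne : C :\: X != set0.
  by apply: contraTneq ltXC => /eqP; rewrite setD_eq0 -leqNgt => /subset_leq_card.
have := C_min CX_closed CX_ne; rewrite cardsD (setIidPr XC).
have : 0 < #|X| by apply/card_gt0P; exists r.
lia.
Qed.

Definition in_tree (X : {set V}) (g : V -> V) (h : V -> nat) :=
  forall i, i \in X -> i != r -> [/\ g i \in X, h (g i) < h i & 0 < T i (g i)].

Lemma in_tree_grows (k : nat) : exists (X : {set V}) (g : V -> V) (h : V -> nat),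
  [/\ r \in X, X \subset C, g r = r, in_tree X g h & minn k #|C| <= #|X|].
Proof.
elim: k => [|k [X [g [h [rX XC gr tree_X le_kX]]]]].
  exists [set r], id, (fun _ => 0); split; rewrite ?inE ?sub1set ?min0n //.
  by move=> i; rewrite inE => ->.
have [le_CX|lt_XC] := leqP #|C| #|X|.
  by exists X, g, h; split; rewrite // geq_min le_CX orbT.
have [i [l [iCX lX Til]]] := minimal_class_edge_into rX XC lt_XC.
move: iCX; rewrite inE => /andP[iX iC].
have neq_i x : x \in X -> (x == i) = false.
  by move=> xX; apply: contraNF iX => /eqP <-.
exists (i |: X), (fun x => if x == i then l else g x),
  (fun x => if x == i then (h l).+1 else h x); split.
- by rewrite inE rX orbT.
- by rewrite subUset sub1set iC XC.
- by rewrite neq_i.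
- move=> x; rewrite !inE => /orP[/eqP ->|xX xr]; first by rewrite eqxx neq_i // inE lX orbT.
  have [gX lt_h Tg] := tree_X x xX xr.
  by rewrite !neq_i // inE gX orbT.
- by rewrite cardsU1 iX; lia.
Qed.

Lemma minimal_class_arborescence : exists g : {ffun V -> V},
  [/\ arborescence g r, forall i, i \in C -> i != r -> 0 < T i (g i)
    & forall i, i \notin C -> g i = r].
Proof.
have [X [g [h [rX XC gr tree_X]]]] := in_tree_grows #|C|.
rewrite minnn => le_CX.
have XC_eq : X = C by apply/eqP; rewrite eqEcard XC le_CX.
subst X.
pose g0 : {ffun V -> V} := [ffun x => if x \in C then g x else r].
have reach_r d i : i \in C -> h i <= d -> fconnect g0 i r.
  elim: d i => [|d IH] i iC le_hd; have [->|ir] := eqVneq i r; rewrite ?connect0 //.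
    by have [_] := tree_X i iC ir; move: le_hd; rewrite leqn0 => /eqP ->.
  have [gC lt_h _] := tree_X i iC ir.
  apply: connect_trans (fconnect1 g0 i) _; rewrite ffunE iC.
  by apply: IH gC _; lia.
exists g0; split=> [|i iC ir|i /negbTE iC]; rewrite ?ffunE ?iC //.
- rewrite /arborescence ffunE r_in_C gr eqxx; apply/forallP => i.
  have [iC|/negbTE iC] := boolP (i \in C); first exact: reach_r (h i) i iC (leqnn _).
  by apply: connect_trans (fconnect1 g0 i) _; rewrite ffunE iC connect0.
- by case: (tree_X i iC ir).
Qed.

End MinimalClosedClass.
Hypothesis out_weight_gt0 : forall i, 0 < out_weight T i.

Theorem exists_stationary_vector (v0 : V) : exists y : V -> nat,
  [/\ exists r, 0 < y r,
      forall l, \sum_i y i * T i l = y l * out_weight T l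
    & forall r, y r <= \prod_(i | i != r) out_weight T i].
Proof.
have setT_closed : forward_closed setT.
  by apply/forall_inP => i _; apply/forallP => l; rewrite inE implybT.
have setT_ne : [set: V] != set0 by apply/set0Pn; exists v0; rewrite inE.
have [C /andP[C_closed /set0Pn[r rC]] C_min] :=
  arg_minnP (P := fun X => forward_closed X && (X != set0)) (fun X : {set V} => #|X|)
    (introT andP (conj setT_closed setT_ne)).
have [g [arb_g Tg g_out]] := minimal_class_arborescence C_closed rC
  (fun X X_closed X_ne => C_min X (introT andP (conj X_closed X_ne))).
(* Redirecting every state outside C to r makes the tree weights vanish off C. *)
pose T' i l := if i \in C then T i l else (l == r : nat).
have out_weight_T' i : out_weight T' i = if i \in C then out_weight T i else 1.
  rewrite /out_weight /T'; case: (i \in C) => //.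
  by rewrite (bigD1 r) //= eqxx big1 // => l /negbTE ->.
pose y := tree_weight T'.
have y_r : 0 < y r.
  apply: (tree_weight_gt0 arb_g) => i ir; rewrite /T'.
  by case: ifPn => [iC|/g_out ->]; [exact: Tg|rewrite eqxx].
have y_out l : l \notin C -> y l = 0.
  move=> lC; have := tree_weight_stationary T' l; rewrite -/y.
  rewrite out_weight_T' (negbTE lC) muln1 => <-; apply: big1 => i _; rewrite /T'.
  case: ifPn => iC; last by rewrite (_ : (l == r) = false) ?muln0 //; apply: contraNF lC => /eqP ->.
  have [->|/(forward_closedP C_closed iC) lC'] := posnP (T i l); first by rewrite muln0.
  by rewrite lC' in lC.
exists y; split=> [|l|r']; first by exists r.
- have := tree_weight_stationary T' l; rewrite -/y out_weight_T'.
  rewrite (eq_bigr (fun i => y i * T i l)) => [|i _]; last first.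
    by rewrite /T'; case: ifPn => // /y_out ->.
  by case: ifPn => [//|/y_out ->]; rewrite !mul0n.
- apply: leq_trans (tree_weight_le_prod T' r') _; apply: leq_prod => i _.
  by rewrite out_weight_T'; case: ifP.
Qed.

End StationaryVector.

Lemma List_seq_iota a b : List.seq a b = iota a b.
Proof. by elim: b a => //= b IH a; rewrite IH. Qed.

Lemma length_filter (f : pred nat) s : length (List.filter f s) = count f s.
Proof. by elim: s => //= a s IH; case: (f a); rewrite /= IH. Qed.

Lemma count_ge2 (T : eqType) (f : pred T) (s : seq T) x x' :
  uniq s -> x \in s -> x' \in s -> x != x' -> f x -> f x' -> 1 < count f s.
Proof.
move=> s_uniq xs x's xx' fx fx'; rewrite -size_filter.
apply: (uniq_leq_size (s1 := [:: x; x'])); first by rewrite /= inE xx'.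
by move=> z; rewrite !inE mem_filter => /orP[] /eqP ->; rewrite ?fx ?fx' ?xs ?x's.
Qed.

Local Open Scope ring_scope.

Lemma natr_IZR (k : nat) : k%:R = IZR (Z.of_nat k) :> R.
Proof. by rewrite -INRE INR_IZR_INZ. Qed.

Lemma sum_IZR (I : finType) (F : I -> R) :
  (forall i, exists z, F i = IZR z) -> exists z, \sum_i F i = IZR z.
Proof.
move=> F_int; apply: (big_ind (fun x => exists z, x = IZR z)) => [|x y [a ->] [b ->]|i _].
- by exists Z0.
- by exists (Z.add a b); rewrite plus_IZR.
- exact: F_int.
Qed.

(* Weighting the affine eigen-equations with a stationary vector makes the
   unknown [u] cancel. *)
Lemma stationary_affine_sum (V : finType) (T : V -> V -> nat) (y : V -> nat)
    (lam : R) (u h : V -> R) :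
  (forall l, \sum_i y i * T i l = y l * out_weight T l)%N ->
  (forall i, (out_weight T i)%:R * (lam + u i) = h i + \sum_l (T i l)%:R * u l) ->
  lam * \sum_i (y i * out_weight T i)%:R = \sum_i (y i)%:R * h i.
Proof.
move=> y_stat affine.
have weighted : \sum_i (y i)%:R * ((out_weight T i)%:R * (lam + u i)) =
    \sum_i (y i)%:R * h i + \sum_l (y l * out_weight T l)%:R * u l.
  rewrite (eq_bigr (fun i => (y i)%:R * h i + \sum_l (y i * T i l)%:R * u l)).
    rewrite big_split /= exchange_big; congr (_ + _); apply: eq_bigr => l _.
    by rewrite -mulr_suml -natr_sum y_stat.
  move=> i _; rewrite affine mulrDr mulr_sumr; congr (_ + _).
  by apply: eq_bigr => l _; rewrite natrM mulrA.
set w := fun i => (y i * out_weight T i)%:R : R.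
have split_lhs : \sum_i (y i)%:R * ((out_weight T i)%:R * (lam + u i)) =
    lam * \sum_i w i + \sum_i w i * u i.
  rewrite mulr_sumr -big_split; apply: eq_bigr => i _.
  by rewrite /w natrM mulrA mulrDr [lam * _]mulrC.
by move: weighted; rewrite split_lhs; apply: addIr.
Qed.

Lemma inv_norm_le_of_int_multiple (lam : R) (S : nat) (z : Z) :
  lam != 0 -> (0 < S)%N -> lam * S%:R = IZR z -> `|lam|^-1 <= S%:R.
Proof.
move=> lam_neq0 S_gt0 lamS.
have z_neq0 : z <> Z0.
  move=> z0; move: lamS; rewrite z0 => /eqP.
  by rewrite mulf_eq0 pnatr_eq0 (negbTE lam_neq0) eqn0Ngt S_gt0.
rewrite -[_^-1]mulr1 ler_pdivrMl ?normr_gt0 // -[S%:R]ger0_norm // -normrM lamS -RabsE -abs_IZR.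
by apply/RleP; apply: IZR_le; lia.
Qed.

Lemma row_sumE (P : nat -> nat -> R) n i : row_sum P n i = \sum_(l < n) P i l.
Proof.
rewrite /row_sum -(big_mkord (fun _ => true)) /index_iota subn0 -List_seq_iota.
by elim: (List.seq 0 n) => [|a s IH]; rewrite ?big_nil ?big_cons //= IH.
Qed.

Lemma pmul_finite (P : nat -> nat -> R) n (v : nat -> R) i :
  pmul P n (fun l => Some (v l)) i = Some (\sum_(l < n) P i l * v l).
Proof.
have -> : \sum_(l < n) P i l * v l = \sum_(l <- List.seq 0 n) P i l * v l.
  by rewrite List_seq_iota (_ : iota 0 n = index_iota 0 n) ?big_mkord // /index_iota subn0.
rewrite /pmul; elim: (List.seq 0 n) => [|a s IH]; rewrite ?big_nil ?big_cons //= IH /pm_term.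
case: (Req_dec_T (P i a) 0) => [->|_] /=; rewrite RplusE ?RmultE //.
by rewrite mul0r !add0r.
Qed.

Lemma foldr_emin_attained (h : nat -> ext) s x :
  fold_right (fun i acc => emin (h i) acc) PInf s = Fin x -> exists2 i, In i s & h i = Fin x.
Proof.
elim: s => [|a s IH] //= min_x.
suff [ha|/IH[i si hi]] : h a = Fin x \/ fold_right (fun i acc => emin (h i) acc) PInf s = Fin x.
- by exists a; [left|].
- by exists i; [right|].
move: min_x; case: (h a) => [|r|]; case: (fold_right _ _ s) => [|r'|] //=;
  try (move=> ->; by [left|right]).
by rewrite /Rmin; case: (Rle_dec r r') => _ [<-]; [left|right].
Qed.

Lemma foldr_tmax_attained (h : nat -> trop) s x :
  fold_right (fun i acc => tmax (h i) acc) None s = Some x -> exists2 i, In i s & h i = Some x.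
Proof.
elim: s => [|a s IH] //= max_x.
suff [ha|/IH[i si hi]] : h a = Some x \/ fold_right (fun i acc => tmax (h i) acc) None s = Some x.
- by exists a; [left|].
- by exists i; [right|].
move: max_x; case: (h a) => [r|]; case: (fold_right _ _ s) => [r'|] //=;
  try (move=> ->; by [left|right]).
by rewrite /Rmax; case: (Rle_dec r r') => _ [<-]; [right|left].
Qed.

(* The minimum in A^# and the maximum in B ⊙ _ are attained at finite entries,
   so every coordinate of the bias equation is an integer plus one entry of P v. *)
Lemma bias_affine_relation (m n q : nat) (A B : nat -> nat -> trop) (P : nat -> nat -> R)
    (v : nat -> R) (lam : R) :
  (forall i j a, (i < m)%coq_nat -> (j < n)%coq_nat -> A i j = Some a -> exists z, a = IZR z) ->
  (forall i l b, (i < m)%coq_nat -> (l < q)%coq_nat -> B i l = Some b -> exists z, b = IZR z) ->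
  is_bias A B P m n q v lam ->
  exists (rho : 'I_n -> 'I_q) (c : 'I_n -> Z),
    forall j : 'I_n, lam + v j = IZR (c j) + \sum_(k < n) P (rho j) k * v k.
Proof.
move=> A_int B_int bias.
suff /fin_all_exists[rc rcP] : forall j : 'I_n, exists lc : 'I_q * Z,
    lam + v j = IZR lc.2 + \sum_(k < n) P lc.1 k * v k.
  by exists (fun j => (rc j).1), (fun j => (rc j).2).
move=> j; have := bias j (ltP (ltn_ord j)); rewrite /Fop /sharp.
case/foldr_emin_attained => i /in_seq[_ ltim]; rewrite /sharp_term.
case Aij: (A i j) => [a|] //; case Bv: (mp_app _ _ _ _) => [b|] // [ab].
move: Bv; rewrite /mp_app => /foldr_tmax_attained[l /in_seq[_ ltlq]].
rewrite pmul_finite /tadd; case Bil: (B i l) => [b'|] // [bb'].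
have [za ea] := A_int i j a ltac:(lia) (ltP (ltn_ord j)) Aij.
have [zb eb] := B_int i l b' ltac:(lia) ltac:(lia) Bil.
have ltlq' : (l < q)%N by apply/ltP; lia.
exists (Ordinal ltlq', Z.sub zb za) => /=.
move: ab bb'; rewrite minus_IZR -ea -eb !RealsE => <- <-.
by rewrite addrA [- a + _]addrC.
Qed.

Section ConditionNumber.
Variables (n q M : nat) (P : nat -> nat -> R) (Q : nat -> nat -> Z) (lam : R) (v : nat -> R).
Variables (rho : 'I_n -> 'I_q) (c : 'I_n -> Z).
Hypotheses (n_gt0 : (0 < n)%coq_nat) (P_stoch : row_stochastic P q n)
  (M_gt0 : (0 < M)%coq_nat)
  (P_Q : forall i l, (i < q)%coq_nat -> (l < n)%coq_nat -> P i l = Rdiv (IZR (Q i l)) (INR M))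
  (bias_rel : forall j : 'I_n, lam + v j = IZR (c j) + \sum_(k < n) P (rho j) k * v k)
  (lam_neq0 : lam <> 0).

Let M_neq0 : M%:R != 0 :> R.
Proof. by rewrite pnatr_eq0 -lt0n; apply/ltP. Qed.

Lemma P_ge0 (r : 'I_q) (l : 'I_n) : 0 <= P r l.
Proof. by case: P_stoch => ge0 _; apply/RleP/ge0; apply/ltP. Qed.

Lemma P_row_sum (r : 'I_q) : \sum_(l < n) P r l = 1.
Proof. by case: P_stoch => _ sum1; rewrite -row_sumE sum1 //; apply/ltP. Qed.

Definition Qnat (r : 'I_q) (l : 'I_n) : nat := Z.to_nat (Q r l).

Lemma Qnat_scaled r l : (Qnat r l)%:R = M%:R * P r l.
Proof.
have PQ : P r l = IZR (Q r l) / M%:R by rewrite P_Q ?RdivE ?INRE //; apply/ltP.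
have Q_ge0 : Z.le Z0 (Q r l).
  apply/le_IZR/RleP; have := P_ge0 r l.
  by rewrite PQ pmulr_lge0 // invr_gt0 lt0r M_neq0 /=.
by rewrite natr_IZR /Qnat Z2Nat.id // PQ mulrCA mulfV ?mulr1.
Qed.

Lemma bound_from_int_multiple (S : nat) (z : Z) (Bd : nat) :
  (0 < S)%N -> lam * S%:R = IZR z -> (S <= Bd)%N -> Rle (Rinv (Rabs lam)) (INR Bd).
Proof.
move=> S_gt0 lamS le_SB; apply: (Rle_trans _ (INR S)); last exact/le_INR/leP.
by apply/RleP; rewrite RinvE RabsE INRE; apply: inv_norm_le_of_int_multiple lamS => //; apply/eqP.
Qed.

(* All rows of the column chain sum to M, so M cancels and already
   lam * (sum of y) is an integer. *)
Theorem cond_le_column_chain : Rle (Rinv (Rabs lam)) (Rmult (INR n) (pow (INR M) (n - 1))).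
Proof.
pose T (j l : 'I_n) := Qnat (rho j) l.
have out_T j : out_weight T j = M.
  apply/eqP; rewrite -(eqr_nat R) /out_weight natr_sum.
  by rewrite (eq_bigr _ (fun l _ => Qnat_scaled _ l)) -mulr_sumr P_row_sum mulr1.
have affine j : (out_weight T j)%:R * (lam + v j) = M%:R * IZR (c j) + \sum_l (T j l)%:R * v l.
  rewrite out_T bias_rel mulrDr mulr_sumr; congr (_ + _).
  by apply: eq_bigr => l _; rewrite /T Qnat_scaled mulrA.
have T_gt0 j : (0 < out_weight T j)%N by rewrite out_T; apply/ltP.
have [y [[j0 y_j0] y_stat y_le]] := exists_stationary_vector T_gt0 (Ordinal (introT ltP n_gt0)).
have [z Ez] : exists z, \sum_j (y j)%:R * IZR (c j) = IZR z.
  by apply: sum_IZR => j; exists (Z.mul (Z.of_nat (y j)) (c j)); rewrite mult_IZR -natr_IZR.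
have lam_S : lam * (\sum_j y j)%:R = IZR z.
  have := stationary_affine_sum y_stat affine.
  have -> : \sum_j (y j * out_weight T j)%:R = M%:R * (\sum_j y j)%:R :> R.
    by rewrite natr_sum mulr_sumr; apply: eq_bigr => j _; rewrite out_T natrM mulrC.
  have -> : \sum_j (y j)%:R * (M%:R * IZR (c j)) = M%:R * IZR z.
    by rewrite -Ez mulr_sumr; apply: eq_bigr => j _; rewrite mulrCA.
  by rewrite mulrCA; apply: mulfI.
have y_bound j : (y j <= M ^ (n - 1))%N.
  apply: leq_trans (y_le j) _; rewrite (eq_bigr _ (fun i _ => out_T i)).
  by rewrite (eq_bigl (predC1 j)) // prod_nat_const cardC1 card_ord subn1.
rewrite (_ : Rmult _ _ = INR (n * M ^ (n - 1))); last by rewrite RmultE RpowE !INRE natrM natrX.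
apply: (bound_from_int_multiple _ lam_S).
  by rewrite (bigD1 j0) //= ltn_addr.
apply: (@leq_trans (\sum_(j : 'I_n) M ^ (n - 1))); first by apply: leq_sum => j _; apply: y_bound.
by rewrite sum_nat_const card_ord.
Qed.

Definition nondet_row (r : nat) : bool := Nat.leb 2 (npos_row P n r).

Lemma det_row_one (r : 'I_q) (l : 'I_n) : ~~ nondet_row r -> P r l != 0 -> P r l = 1.
Proof.
move=> det Pl_neq0; have Pl_gt0 : 0 < P r l by rewrite lt0r Pl_neq0 P_ge0.
have others l' : l' != l -> P r l' = 0.
  move=> l'l; apply/eqP; apply: contraNT det => Pl'_neq0.
  have Pl'_gt0 : 0 < P r l' by rewrite lt0r Pl'_neq0 P_ge0.
  rewrite /nondet_row /npos_row length_filter List_seq_iota; apply/Nat.leb_le/leP.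
  apply: (count_ge2 (iota_uniq 0 n) _ _ l'l); rewrite ?mem_iota ?ltn_ord //.
    by case: Rlt_dec => // -[]; apply/RltP.
  by case: Rlt_dec => // -[]; apply/RltP.
by rewrite -(P_row_sum r) (bigD1 l) //= big1 ?addr0 // => l' /others.
Qed.

(* Deterministic rows of P are 0/1 rows, so they only need the scale 1. *)
Definition row_scale (r : nat) : nat := if nondet_row r then M else 1%N.

Definition scaled_row (r : 'I_q) (l : 'I_n) : nat :=
  if nondet_row r then Qnat r l else (Qnat r l %/ M)%N.

Lemma scaled_rowE r l : (scaled_row r l)%:R = (row_scale r)%:R * P r l.
Proof.
rewrite /scaled_row /row_scale; case: ifPn => [_|det]; first exact: Qnat_scaled.
have := Qnat_scaled r l; have [->|/(det_row_one det) ->] := eqVneq (P r l) 0.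
  by rewrite mulr0 => /eqP; rewrite pnatr_eq0 => /eqP ->; rewrite div0n mulr0.
by rewrite !mulr1 => /eqP; rewrite eqr_nat => /eqP ->; rewrite divnn lt0n -(pnatr_eq0 R) M_neq0.
Qed.

Lemma prod_row_scale : (\prod_(r < q) row_scale r)%N = (M ^ num_nondet P q n)%N.
Proof.
rewrite -(big_mkord xpredT) /index_iota subn0 /num_nondet length_filter List_seq_iota.
by rewrite /row_scale -big_mkcond big_const_seq iter_muln_1.
Qed.

Lemma sum_by_fibers (I J : finType) (p : I -> J) (F : I -> R) :
  \sum_i F i = \sum_j \sum_(i | p i == j) F i.
Proof. by rewrite (partition_big p xpredT). Qed.

Definition state_chain (r s : 'I_q) : nat := \sum_(l | rho l == s) scaled_row r l.

Lemma out_weight_state_chain r : out_weight state_chain r = row_scale r.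
Proof.
apply/eqP; rewrite -(eqr_nat R) /out_weight /state_chain natr_sum.
rewrite (eq_bigr _ (fun s _ => natr_sum _ _ _ _)) -sum_by_fibers.
by rewrite (eq_bigr _ (fun l _ => scaled_rowE r l)) -mulr_sumr P_row_sum mulr1.
Qed.

Lemma state_chain_affine (r : 'I_q) :
  let u s := \sum_(l < n) P s l * v l in
  (out_weight state_chain r)%:R * (lam + u r)
  = \sum_l (scaled_row r l)%:R * IZR (c l) + \sum_s (state_chain r s)%:R * u s.
Proof.
move=> u; rewrite out_weight_state_chain.
have -> : (row_scale r)%:R * (lam + u r) = \sum_l (scaled_row r l)%:R * (lam + v l).
  have lamE : lam = \sum_(l < n) P r l * lam by rewrite -mulr_suml P_row_sum mul1r.
  rewrite {1}lamE /u -big_split mulr_sumr /=; apply: eq_bigr => l _.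
  by rewrite scaled_rowE -mulrA [in RHS]mulrDr.
have -> : \sum_s (state_chain r s)%:R * u s = \sum_l (scaled_row r l)%:R * u (rho l).
  rewrite (sum_by_fibers rho); apply: eq_bigr => s _.
  by rewrite /state_chain natr_sum mulr_suml; apply: eq_bigr => l /eqP ->.
by rewrite -big_split; apply: eq_bigr => l _; rewrite bias_rel mulrDr.
Qed.

(* The stationary vector lives on the image of rho (at most n states),
   and each of its entries weighted by the row scale is at most the product of
   all row scales, that is M^k. *)
Theorem cond_le_state_chain :
  Rle (Rinv (Rabs lam)) (Rmult (INR n) (pow (INR M) (num_nondet P q n))).
Proof.
set k := num_nondet P q n.
have T_gt0 r : (0 < out_weight state_chain r)%N.
  by rewrite out_weight_state_chain /row_scale; case: ifP => //; rewrite lt0n -(pnatr_eq0 R) M_neq0.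
have [y [[r0 y_r0] y_stat y_le]] :=
  exists_stationary_vector T_gt0 (rho (Ordinal (introT ltP n_gt0))).
have [z Ez] : exists z, \sum_r (y r)%:R * \sum_l (scaled_row r l)%:R * IZR (c l) = IZR z.
  apply: sum_IZR => r; have [z' ->] : exists z', \sum_l (scaled_row r l)%:R * IZR (c l) = IZR z'.
    by apply: sum_IZR => l; exists (Z.mul (Z.of_nat (scaled_row r l)) (c l)); rewrite mult_IZR -natr_IZR.
  by exists (Z.mul (Z.of_nat (y r)) z'); rewrite mult_IZR -natr_IZR.
have lam_S : lam * (\sum_r y r * out_weight state_chain r)%N%:R = IZR z.
  by rewrite -Ez natr_sum; apply: stationary_affine_sum y_stat state_chain_affine.
have y_out s : s \notin [set rho l | l in 'I_n] -> y s = 0%N.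
  move=> s_out; have := y_stat s; rewrite big1 => [|i _]; last first.
    rewrite /state_chain big_pred0 ?muln0 // => l.
    by apply: contraNF s_out => /eqP <-; apply: imset_f.
  by move/esym/eqP; rewrite muln_eq0 (negbTE (lt0n_neq0 (T_gt0 s))) orbF => /eqP.
have term_le r : (y r * out_weight state_chain r <= M ^ k)%N.
  have := y_le r; rewrite (eq_bigr _ (fun i _ => out_weight_state_chain i)) => y_le_r.
  rewrite out_weight_state_chain -prod_row_scale (bigD1 r) //= [in X in (_ <= X)%N]mulnC.
  exact: leq_mul y_le_r (leqnn _).
have S_le : (\sum_r y r * out_weight state_chain r <= n * M ^ k)%N.
  rewrite (bigID (mem [set rho l | l in 'I_n])) /= [X in (_ + X)%N]big1 ?addn0 => [|r /y_out ->] //.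
  apply: (@leq_trans (\sum_(r in [set rho l | l in 'I_n]) M ^ k)).
    by apply: leq_sum => r _; apply: term_le.
  by rewrite sum_nat_const leq_mul2r (leq_trans (leq_imset_card _ _)) ?card_ord ?orbT.
rewrite (_ : Rmult _ _ = INR (n * M ^ k)); last by rewrite RmultE RpowE !INRE natrM natrX.
apply: (bound_from_int_multiple _ lam_S S_le).
by rewrite (bigD1 r0) //= ltn_addr // muln_gt0 y_r0 T_gt0.
Qed.

End ConditionNumber.

End CondBound.

Theorem mainTheorem9
  (m n q : nat) (A B : nat -> nat -> trop) (P : nat -> nat -> R)
  (Q : nat -> nat -> Z) (M : nat)
  (hn : (0 < n)%nat)
  (hA_col : forall j, (j < n)%nat -> exists i, (i < m)%nat /\ A i j <> None)
  (hB_row : forall i, (i < m)%nat -> exists l, (l < q)%nat /\ B i l <> None)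
  (hA_int : forall i j a, (i < m)%nat -> (j < n)%nat -> A i j = Some a ->
              exists z : Z, a = IZR z)
  (hB_int : forall i l b, (i < m)%nat -> (l < q)%nat -> B i l = Some b ->
              exists z : Z, b = IZR z)
  (hP : row_stochastic P q n)
  (hM : (0 < M)%nat)
  (hPQ : forall i l, (i < q)%nat -> (l < n)%nat -> P i l = IZR (Q i l) / INR M)
  (v : nat -> R) (lam : R)
  (hbias : is_bias A B P m n q v lam)
  (hlam : lam <> 0) :
  / Rabs lam <= INR n * INR M ^ (Nat.min (num_nondet P q n) (n - 1)).
Proof.
(* hA_col and hB_row make F real-valued; at v the bias equation already
   provides this. *)
destruct (CondBound.bias_affine_relation hA_int hB_int hbias) as (rho & c & hrel).
destruct (Nat.le_gt_cases (n - 1) (num_nondet P q n)) as [hk | hk].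
- rewrite Nat.min_r by exact hk.
  exact (CondBound.cond_le_column_chain hn hP hM hPQ hrel hlam).
- rewrite Nat.min_l by (apply Nat.lt_le_incl; exact hk).
  exact (CondBound.cond_le_state_chain hn hP hM hPQ hrel hlam).
Qed.
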